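(* Let $H$ and $J$ be complex Hilbert spaces with $H$ infinite dimensional, and let $T \in \mathcal{L}(H,J)$ be a compact operator. Then $T$ satisfies the property $\mathcal{N}^*$ if and only if $T$ is non-injective.
   Context: $\mathcal{L}(H,J)$ denotes the space of bounded linear operators from $H$ to $J$. For $T \in \mathcal{L}(H,J)$ put $[T] := \inf_{\|x\|_H = 1} \|Tx\|_J$. An operator $T \in \mathcal{L}(H,J)$ satisfies the property $\mathcal{N}^*$ if there exists $x_0 \in H$ with $\|x_0\|_H = 1$ such that $[T] = \|T x_0\|_J$. *)

From HB Require Import structures.
From mathcomp Require Import all_boot all_order all_algebra.
From mathcomp Require Import complex.
From mathcomp Require Import all_classical all_reals all_analysis.
Set Implicit Arguments. Unset Strict Implicit. Unset Printing Implicit Defensive.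
Import Order.TTheory GRing.Theory Num.Theory.
Import numFieldNormedType.Exports.
Local Open Scope classical_set_scope.
Local Open Scope ring_scope.

(* An inner product on a normed space V over R[i] inducing its norm:
   linear in the first argument, conjugate symmetric, <x,x> = |x|^2
   (positive definiteness follows from the norm axioms). *)
Definition is_inner_product (R : realType) (V : normedModType R[i])
    (ip : V -> V -> R[i]) : Prop :=
  [/\ forall (a : R[i]) (x y z : V), ip (a *: x + y) z = a * ip x z + ip y z,
      forall x y : V, ip y x = ((ip x y)^*)%C
    & forall x : V, ip x x = `|x| ^+ 2].

Definition is_hilbert (R : realType) (V : completeNormedModType R[i]) : Prop :=
  exists ip : V -> V -> R[i], is_inner_product ip.

Definition infinite_dimensional (R : realType) (V : normedModType R[i]) : Prop :=
  forall (n : nat) (e : 'I_n -> V), exists x : V,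
    forall c : 'I_n -> R[i], x <> \sum_(i < n) c i *: e i.

Definition bounded_linear (R : realType) (H J : normedModType R[i])
    (T : H -> J) : Prop :=
  linear T /\ continuous T.

Definition compact_operator (R : realType) (H J : normedModType R[i])
    (T : H -> J) : Prop :=
  compact (closure (T @` closed_ball (0 : H) 1)).

(* [T] := inf_{|x| = 1} |T x|  (norms are real elements of R[i]; we take Re). *)
Definition lower_bound (R : realType) (H J : normedModType R[i])
    (T : H -> J) : R :=
  inf [set complex.Re `|T x| | x in [set x : H | `|x| = 1]].

Definition property_Nstar (R : realType) (H J : normedModType R[i])
    (T : H -> J) : Prop :=
  exists x0 : H, `|x0| = 1 /\ lower_bound T = complex.Re `|T x0|.

From HB Require Import structures.
From mathcomp Require Import all_boot all_order all_algebra.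
From mathcomp Require Import complex.
From mathcomp Require Import all_classical all_reals all_analysis.
Set Implicit Arguments. Unset Strict Implicit. Unset Printing Implicit Defensive.
Import Order.TTheory GRing.Theory Num.Theory.
Import numFieldNormedType.Exports.
Local Open Scope classical_set_scope.
Local Open Scope ring_scope.

(* If T x = 0 for a unit vector x, then [T] = 0 = |T x| is attained.
   Conversely, if T is injective and [T] = |T x0|, then c := |T x0| > 0 and
   |T z| >= c |z| for every z.  An infinite dimensional inner product space
   contains an orthonormal sequence (e_n); the vectors T (e_n / 2) lie in the
   compact set closure (T (unit ball)) and are pairwise at distance >= c/2,
   which is impossible in a compact set. *)

Lemma compact_separated_seq (K : numFieldType) (V : normedModType K)
    (A : set V) (f : nat -> V) (r : K) :
  compact A -> (forall n, A (f n)) -> 0 < r ->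
  exists n m, (n < m)%N /\ `|f n - f m| < r.
Proof.
move=> cA Af r0.
have fA : (f @ \oo) A by exists 0%N => // n _; apply: Af.
have [p [_ clp]] := cA (f @ \oo) (fmap_proper_filter _ _) fA.
have r20 : 0 < r / 2 by rewrite divr_gt0.
have Bp := nbhsx_ballx p _ r20.
have frange : (f @ \oo) (range f) by exists 0%N => // n _; exists n.
have [_ [[n _ <-] pfn]] := clp _ _ frange Bp.
have tail : (f @ \oo) (f @` [set m | (n < m)%N]).
  by exists n.+1 => // m nm; exists m.
have [_ [[m nm <-] pfm]] := clp _ _ tail Bp.
exists n, m; split => //.
rewrite -ball_normE /ball_ in pfn pfm.
have -> : f n - f m = (p - f m) - (p - f n).
  by rewrite opprB [RHS]addrC addrA subrK.
apply: le_lt_trans (ler_normB _ _) _.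
by rewrite [r]splitr addrC ltrD.
Qed.

Section InnerProduct.
Variables (R : realType) (V : normedModType R[i]) (ip : V -> V -> R[i]).
Hypothesis hip : is_inner_product ip.

Let ipl (z : V) : {scalar V} :=
  HB.pack (ip^~ z) (GRing.isLinear.Build _ _ _ _ (ip^~ z)
    (fun a x y => let: And3 lin _ _ := hip in lin a x y z)).

Lemma ipBl x y z : ip (x - y) z = ip x z - ip y z.
Proof. exact: (raddfB (ipl z) x y). Qed.

Lemma ipZl a x z : ip (a *: x) z = a * ip x z.
Proof. exact: (scalarZ (ipl z) a x). Qed.

Lemma ip_suml (l : seq V) (F : V -> V) z :
  ip (\sum_(v <- l) F v) z = \sum_(v <- l) ip (F v) z.
Proof. exact: (raddf_sum (ipl z) l predT F). Qed.

Lemma ipC x y : ip y x = ((ip x y)^*)%C.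
Proof. by case: hip. Qed.

Lemma ipBr x y z : ip x (y - z) = ip x y - ip x z.
Proof. by rewrite ipC ipBl raddfB /= -!ipC. Qed.

Lemma ip_norm x : ip x x = `|x| ^+ 2.
Proof. by case: hip. Qed.

Definition orthonormal (l : seq V) :=
  uniq l /\ {in l &, forall v w, ip v w = (v == w)%:R}.

Lemma orthonormal_orth_unit (l : seq V) :
  infinite_dimensional V -> orthonormal l ->
  exists x, ip x x = 1 /\ {in l, forall w, ip x w = 0}.
Proof.
move=> hinf [ul onl].
have [x xNspan] := hinf (size l) (fun i => nth 0 l i).
pose y := x - \sum_(v <- l) ip x v *: v.
have y_neq0 : y != 0.
  apply: contra_notN (xNspan (fun i => ip x (nth 0 l i))).
  by rewrite subr_eq0 => /eqP {1}->; rewrite (big_nth 0) big_mkord.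
have y_orth w : w \in l -> ip y w = 0.
  move=> wl; rewrite ipBl ip_suml (bigD1_seq w) //= ipZl (onl w w) // eqxx mulr1.
  rewrite big_seq_cond big1 ?addr0 ?subrr // => v /andP[vl /negPf vw].
  by rewrite ipZl (onl v w) // vw mulr0.
exists (`|y|^-1 *: y); split.
  by rewrite ip_norm normfZV // expr1n.
by move=> w wl; rewrite ipZl y_orth ?mulr0.
Qed.

Lemma orthonormal_cons (l : seq V) x :
  orthonormal l -> ip x x = 1 -> {in l, forall w, ip x w = 0} ->
  orthonormal (x :: l).
Proof.
move=> [ul onl] x1 x_orth.
have xNl : x \notin l.
  by apply/negP => /x_orth; rewrite x1 => /eqP; rewrite oner_eq0.
split; first by rewrite /= xNl ul.
have ipx w : w \in l -> ip w x = 0 by move=> /x_orth xw; rewrite ipC xw conjc0.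
move=> v w; rewrite !inE => /orP[/eqP->|vl] /orP[/eqP->|wl].
- by rewrite eqxx.
- by rewrite x_orth //; case: eqP xNl => // ->; rewrite wl.
- by rewrite ipx //; case: eqP xNl => // <-; rewrite vl.
- exact: onl.
Qed.

Lemma orthonormal_seq : infinite_dimensional V ->
  exists e : nat -> V, forall n m, ip (e n) (e m) = (n == m)%:R.
Proof.
move=> hinf.
have /boolp.choice[g hg] : forall l, exists x, orthonormal l ->
    ip x x = 1 /\ {in l, forall w, ip x w = 0}.
  move=> l; have [/(orthonormal_orth_unit hinf)[x hx]|lN] := pselect (orthonormal l).
    by exists x.
  by exists 0 => /lN.
pose s n := iter n (fun l => g l :: l) [::].
have s_on n : orthonormal (s n).
  elim: n => [|n IH]; first by split.
  by have [g1 g0] := hg _ IH; apply: orthonormal_cons.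
have mem_s n m : (n < m)%N -> g (s n) \in s m.
  elim: m => [//|m IH]; rewrite ltnS leq_eqVlt => /orP[/eqP->|/IH nm].
    by rewrite inE eqxx.
  by rewrite inE nm orbT.
have e_neq n m : (n < m)%N -> g (s n) != g (s m).
  move=> nm; have /andP[gNs _] := (s_on m.+1).1.
  by apply: contraNneq gNs => <-; apply: mem_s.
have e_inj : injective (fun n => g (s n)).
  by move=> n m /= enm; case: (ltngtP n m) => // /e_neq; rewrite enm eqxx.
exists (fun n => g (s n)) => n m.
have [_ onl] := s_on (maxn n m).+1.
rewrite onl ?mem_s ?ltnS ?leq_maxl ?leq_maxr //.
by rewrite (inj_eq e_inj).
Qed.

Lemma orthonormal_seq_sep (e : nat -> V) :
  (forall n m, ip (e n) (e m) = (n == m)%:R) ->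
  forall n m, n != m -> 1 <= `|e n - e m|.
Proof.
move=> on n m nm.
have sq2 : `|e n - e m| ^+ 2 = 2.
  by rewrite -ip_norm !ipBl !ipBr !on !eqxx [m == n]eq_sym (negPf nm) !subr0 sub0r opprK.
by rewrite -(expr_ge1 (n := 2)) // sq2 ler1n.
Qed.

End InnerProduct.

Lemma RRe_norm (R : realType) (V : normedModType R[i]) (v : V) :
  (complex.Re `|v|)%:C%C = `|v|.
Proof. exact/RRe_real/ger0_real/normr_ge0. Qed.

Section LowerBound.
Variables (R : realType) (H J : normedModType R[i]) (T : H -> J).

Let image_lbound0 :
  lbound [set complex.Re `|T x| | x in [set x : H | `|x| = 1]] 0.
Proof. by move=> _ [y _ <-]; rewrite -ler0c RRe_norm. Qed.

Lemma lower_bound_le x : `|x| = 1 -> lower_bound T <= complex.Re `|T x|.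
Proof. by move=> x1; apply: (ge_inf (ex_intro _ 0 image_lbound0)); exists x. Qed.

Lemma lower_bound_eq0 x : `|x| = 1 -> T x = 0 -> lower_bound T = 0.
Proof.
move=> x1 Tx0; apply/le_anti/andP; split.
  by have := lower_bound_le x1; rewrite Tx0 normr0.
by apply: lb_le_inf image_lbound0; exists (complex.Re `|T x|), x.
Qed.

End LowerBound.

Lemma lower_bound_mul_le (R : realType) (H J : normedModType R[i])
    (T : {linear H -> J}) z :
  (lower_bound T)%:C%C * `|z| <= `|T z|.
Proof.
have [->|z0] := eqVneq z 0; first by rewrite normr0 mulr0 normr_ge0.
have z_unit : `|z| \is a GRing.unit by rewrite unitfE normr_eq0.
have -> : `|T z| = `|T (`|z|^-1 *: z)| * `|z|.
  by rewrite linearZ normrZ normfV normr_id mulrAC mulVr ?mul1r.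
by apply: ler_wpM2r => //; rewrite -RRe_norm lecR lower_bound_le ?normfZV.
Qed.

Lemma additive_noninjective_ker (U V : zmodType) (f : {additive U -> V}) :
  ~ injective f -> exists2 z, z != 0 & f z = 0.
Proof.
move=> fninj; apply: boolp.contrapT => noker; apply: fninj.
apply: raddf_inj => z fz; apply: boolp.contrapT => z0.
by apply: noker; exists z => //; apply/eqP.
Qed.

Lemma compact_operator_not_bounded_below (R : realType)
    (H J : normedModType R[i]) (ip : H -> H -> R[i]) (T : {linear H -> J})
    (c : R[i]) :
  is_inner_product ip -> infinite_dimensional H ->
  compact_operator T -> 0 < c -> ~ (forall z, c * `|z| <= `|T z|).
Proof.
move=> hip hinf hK c0 Tbelow.
have [e on] := orthonormal_seq hip hinf.
have e1 n : `|e n| = 1.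
  by apply/eqP; rewrite -sqrp_eq1 // -(ip_norm hip) on eqxx.
have half_gt0 : (0 : R[i]) < 2^-1 by rewrite invr_gt0 ltr0n.
(* Halving puts e n in the open unit ball, which lies in the closed one. *)
pose f n := T (2^-1 *: e n).
have f_in n : closure (T @` closed_ball (0 : H) 1) (f n).
  apply/subset_closure; exists (2^-1 *: e n) => //.
  apply/subset_closed_ball; rewrite -ball_normE /ball_ /= sub0r normrN normrZ.
  by rewrite e1 mulr1 (ger0_norm (ltW half_gt0)) invf_lt1 ?ltr1n.
have [n [m [nm fnm]]] := compact_separated_seq hK f_in (divr_gt0 c0 (ltr0n _ 2)).
suff : c / 2 <= `|f n - f m| by move/(lt_le_trans fnm); rewrite ltxx.
rewrite -linearB -scalerBr; apply: le_trans (Tbelow _).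
rewrite normrZ (ger0_norm (ltW half_gt0)) ler_pM2l // ler_peMr ?(ltW half_gt0) //.
by rewrite (orthonormal_seq_sep hip on) // neq_ltn nm.
Qed.

Theorem proposition1p2 (R : realType) (H J : completeNormedModType R[i])
    (hH : is_hilbert H) (hJ : is_hilbert J) (hinf : infinite_dimensional H)
    (T : H -> J) (hT : bounded_linear T) (hK : compact_operator T) :
  property_Nstar T <-> ~ injective T.
Proof.
case: hT => lT _; move: hK.
have [{lT}T' ->] : exists T' : {linear H -> J}, T = T'.
  by exists (HB.pack_for {linear H -> J} T (GRing.isLinear.Build _ _ _ _ T lT)).
clear T; move: T' => T hK; split.
- move=> [x0 [x0_1 lbE]] Tinj.
  have [ip hip] := hH.
  apply: (compact_operator_not_bounded_below hip hinf hK (c := `|T x0|)).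
    by rewrite normr_gt0 raddf_eq0 // -normr_eq0 x0_1 oner_eq0.
  by move=> z; rewrite -[`|T x0|]RRe_norm -lbE; apply: lower_bound_mul_le.
- move=> /additive_noninjective_ker[z z0 Tz].
  have Tu : T (`|z|^-1 *: z) = 0 by rewrite linearZZ Tz scaler0.
  exists (`|z|^-1 *: z); split; first exact: normfZV.
  by rewrite (lower_bound_eq0 (normfZV z0) Tu) Tu normr0.
Qed.
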